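(* Let $(\underline\ell,\underline{\mathbf s})\in\mathbf F^r_+$ and let $g\in\mathbf U(\mathfrak n^-_{r-1/2}[t])_{-\eta}$ with $\eta\ne0$. Then $[\mathbf x^+_r(\underline\ell,\underline{\mathbf s}),g]$ is a linear combination of elements of the form $g'\,\mathbf x^+_r(\underline m,\underline{\mathbf p})$ with $g'\in\mathbf U(\mathfrak n^-_{r-1/2}[t])$ and $(\underline m,\underline{\mathbf p})\in\mathbf F^r_+$; moreover, if $g'$ is a constant then $|\underline{\mathbf p}|\blacktriangleright|\underline{\mathbf s}|$.
   Context: $\mathfrak g=\mathfrak{sp}_{2r}$: complex matrices $(a_{i,j})$, indices $1,\dots,r,-r,\dots,-1$, $a_{i,j}=-\mathrm{sgn}(i)\mathrm{sgn}(j)a_{-j,-i}$; $\mathfrak h$ spanned by $E_{i,i}-E_{-i,-i}$. Root vectors: $x^+_{i,j-1}=E_{i,j}-E_{-j,-i}$, $x^-_{i,j-1}=E_{j,i}-E_{-i,-j}$, $x^+_{i,\overline j}=E_{i,-j}+E_{j,-i}$, $x^-_{i,\overline j}=E_{-j,i}+E_{-i,j}$ ($1\le i<j\le r$), $x^+_{i,\overline i}=E_{i,-i}$, $x^-_{i,\overline i}=E_{-i,i}$, $x^\pm_{i,r}:=x^\pm_{i,\overline r}$. $\mathfrak n^-_{r-1/2}$ is the span of $x^-_{i,j},x^-_{i,\overline j}$ for $1\le i\le j<r$; $\mathfrak a[t]=\mathfrak a\otimes\mathbb C[t]$; $\mathbf U(\mathfrak n^-_{r-1/2}[t])_{-\eta}$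 is the subspace of elements of weight $-\eta\in\mathfrak h^*$ under the adjoint action of $\mathfrak h$. $\mathbf F_+$: pairs $(\ell,\mathbf s)$, $\ell\in\mathbb N$, $\mathbf s=(\mathbf s(1)\le\dots\le\mathbf s(\ell))$ with all $\mathbf s(p)\in\mathbb N_{>0}$, including $(0,\emptyset)$; $|\mathbf s|=\sum_p\mathbf s(p)$; $\mathbf F^r_+$ the $r$-fold product, elements $(\underline\ell,\underline{\mathbf s})$, $|\underline{\mathbf s}|=(|\mathbf s_1|,\dots,|\mathbf s_r|)$. $\mathbf x^+_r(\underline\ell,\underline{\mathbf s})=\prod_{i=1}^r\prod_{p=1}^{\ell_i}(x^+_{i,r}\otimes t^{\mathbf s_i(p)})$ (in increasing $i$). For $\underline d,\underline e\in\mathbb N^r$, $\underline d\blacktriangleright\underline e$ means that at the largest index $s$ with $d_s\ne e_s$ one has $d_s>e_s$. *)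

From mathcomp Require Import all_boot all_algebra.
From mathcomp Require Import complex.
From mathcomp Require Import Rstruct.
From Stdlib Require Reals.

Set Implicit Arguments.
Unset Strict Implicit.
Unset Printing Implicit Defensive.
Import GRing.Theory.
Local Open Scope ring_scope.

Definition C : fieldType := (Rdefinitions.R)[i].

Section Sp.
Variable r : nat.

(* Matrices of size 2r.  Row/column position p : 'I_(2r) encodes the index
   1,...,r,-r,...,-1 in this order:  i (1<=i<=r) |-> i-1,  -j (1<=j<=r) |-> 2r-j. *)
Definition mx := 'M[C]_(r.*2).

Definition pos (z : int) : nat :=
  if (0 <= z) then (absz z - 1)%N else (r.*2 - absz z)%N.

Definition E (i j : int) : mx :=
  \matrix_(p, q) (((p : nat) == pos i) && ((q : nat) == pos j))%:R.

(* sign of the index sitting at position p; -i sits at position rev_ord (pos i) *)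
Definition sgnp (p : 'I_(r.*2)) : C := if (p < r)%N then 1 else -1.

Definition is_sp (A : mx) : bool :=
  [forall p, forall q, A p q == - (sgnp p * sgnp q) * A (rev_ord q) (rev_ord p)].

Definition zi (n : nat) : int := Posz n.

(* x^+_{i,r} := x^+_{i,\bar r}  (1 <= i <= r) *)
Definition xplus (i : nat) : mx :=
  if (i < r)%N then E (zi i) (- zi r) + E (zi r) (- zi i) else E (zi r) (- zi r).

(* x^-_{i,j} = x^-_{i,(j+1)-1} = E_{j+1,i} - E_{-i,-(j+1)}   (i <= j) *)
Definition xminus_root (i j : nat) : mx :=
  E (zi j.+1) (zi i) - E (- zi i) (- zi j.+1).
Definition xminus_bar (i j : nat) : mx :=
  if (i < j)%N then E (- zi j) (zi i) + E (- zi i) (zi j) else E (- zi i) (zi i).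

Definition nminus_basis : seq mx :=
  flatten [seq flatten [seq [:: xminus_root i j; xminus_bar i j] | j <- iota i (r - i)]
          | i <- iota 1 (r - 1)].

(* Cartan element  sum_i d_i (E_{i,i} - E_{-i,-i}); h^* is identified with 'I_r -> C
   via the coordinates mu_i = mu(E_{i,i} - E_{-i,-i}). *)
Definition cartan (d : 'I_r -> C) : mx :=
  \sum_(i < r) d i *: (E (zi i.+1) (zi i.+1) - E (- zi i.+1) (- zi i.+1)).

Definition letter_wt (mu : 'I_r -> C) (X : mx) : Prop :=
  forall d : 'I_r -> C,
    cartan d *m X - X *m cartan d = (\sum_(i < r) mu i * d i) *: X.

(* generators:  (A, k)  stands for  A (x) t^k *)
Definition gen := (mx * nat)%type.
Definition word := seq gen.
(* formal linear combinations of words in the free (tensor) algebra *)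
Definition fsum := seq (C * word).

Definition coef (f : fsum) (w : word) : C := \sum_(x <- f | x.2 == w) x.1.
Definition fmul (f h : fsum) : fsum := [seq (x.1 * y.1, x.2 ++ y.2) | x <- f, y <- h].
Definition fneg (f : fsum) : fsum := [seq (- x.1, x.2) | x <- f].
Definition fone (w : word) : fsum := [:: (1, w)].

Definition linrel (k : nat) (c : C) (A B : mx) : fsum :=
  [:: (1, [:: (c *: A + B, k)]); (- c, [:: (A, k)]); (-1, [:: (B, k)])].
Definition brel (a b : nat) (A B : mx) : fsum :=
  [:: (1, [:: (A, a); (B, b)]); (-1, [:: (B, b); (A, a)]);
      (-1, [:: (A *m B - B *m A, (a + b)%N)])].

Definition is_rel (f : fsum) : Prop :=
  (exists k c A B, is_sp A /\ is_sp B /\ f = linrel k c A B) \/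
  (exists a b A B, is_sp A /\ is_sp B /\ f = brel a b A B).

(* f lies in the two-sided ideal generated by the relations *)
Definition in_ideal (f : fsum) : Prop :=
  exists L : seq ((C * word) * fsum * word),
    (forall e, e \in L -> is_rel e.1.2) /\
    forall w, coef f w =
      coef (flatten [seq fmul (fone e.1.1.2) (fmul e.1.2 [:: (e.1.1.1, e.2)]) | e <- L]) w.

(* equality in U(sp_{2r}[t]) *)
Definition eqU (f h : fsum) : Prop := in_ideal (f ++ fneg h).

(* words in the generators of n^-_{r-1/2}[t]  (monomials spanning U(n^-_{r-1/2}[t])) *)
Definition nminus_word (w : word) : bool := all (fun x => x.1 \in nminus_basis) w.

Fixpoint word_wt (w : word) (nu : 'I_r -> C) : Prop :=
  match w with
  | [::] => forall i, nu i = 0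
  | x :: w' => exists mu, letter_wt mu x.1 /\ word_wt w' (fun i => nu i - mu i)
  end.

Definition isFplus (s : seq nat) : bool := sorted leq s && all (fun k => (0 < k)%N) s.
Definition isFr (s : {ffun 'I_r -> seq nat}) : Prop := forall i, isFplus (s i).

(* x^+_r(l, s) = prod_{i=1}^r prod_{p=1}^{l_i} (x^+_{i,r} (x) t^{s_i(p)}) *)
Definition xword (s : {ffun 'I_r -> seq nat}) : word :=
  flatten [seq [seq (xplus i.+1, k) | k <- s i] | i : 'I_r <- enum 'I_r].

Definition absF (s : {ffun 'I_r -> seq nat}) (i : 'I_r) : nat := sumn (s i).

Definition btri (d e : 'I_r -> nat) : Prop :=
  exists s : 'I_r, (e s < d s)%N /\ forall t : 'I_r, (s < t)%N -> d t = e t.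

End Sp.

(* Write x^+_r(l, s) as a word in the pairwise commuting letters x^+_{a,r} t^k (k > 0) and move
   each letter of a monomial of g leftwards through it with the bracket relations of U(sp_2r[t]).
   The bracket of x^+_{a,r} with x^-_{i,j} is a multiple of x^+_{j+1,r} if a = i and 0 otherwise;
   its bracket with x^-_{i,\bar j} is x^-_{j,r-1} or x^-_{i,r-1} if a = i or a = j, and 0 otherwise.
   So every term produced is an n^- word followed by x^+ letters, which are then sorted into some
   x^+_r(m, p).  Count each letter x^-_{i,r-1} t^l as if it were x^+_{r,r} t^l; then the sums
   S_t = sum of the degrees of the letters of index >= t never decrease during the rewriting, and
   some S_t increases strictly when the n^- part of a term disappears (the monomials of g are not
   constant, as eta <> 0), since a letter x^+_{i,r} t^k with k > 0 is then moved to a larger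
   index.  The largest t at which S_t differs from its value for x^+_r(l, s) gives |p| |> |s|. *)

From mathcomp Require Import all_boot all_algebra.
From mathcomp Require Import complex Rstruct.
From mathcomp Require Import zify ring.
Import GRing.Theory.
Local Open Scope ring_scope.

Set Implicit Arguments.
Unset Strict Implicit.
Unset Printing Implicit Defensive.

Section Ideal.
Variable r : nat.
Implicit Types (f h k : fsum r) (w v : word r).

Lemma coef_fcat f h w : coef (f ++ h) w = coef f w + coef h w.
Proof. by rewrite /coef big_cat. Qed.

Lemma coef_fneg f w : coef (fneg f) w = - coef f w.
Proof. by rewrite /coef /fneg big_map /= -sumrN. Qed.

Lemma coef_fnil w : coef ([::] : fsum r) w = 0.
Proof. by rewrite /coef big_nil. Qed.

Lemma coef_fcons c u f w : coef ((c, u) :: f) w = (if u == w then c else 0) + coef f w.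
Proof. by rewrite /coef big_cons /=; case: (u == w); rewrite ?add0r. Qed.

Lemma fmul1l w f : fmul (fone w) f = [seq (1 * x.1, w ++ x.2) | x <- f].
Proof. by rewrite /fmul /fone /= cats0. Qed.

Lemma fmul_monomial f c w : fmul f [:: (c, w)] = [seq (x.1 * c, x.2 ++ w) | x <- f].
Proof. by elim: f => // x f; rewrite /fmul /= => ->. Qed.

Definition sandwich c w1 w2 f : fsum r := [seq (c * x.1, w1 ++ x.2 ++ w2) | x <- f].

Definition mid_factor w1 w2 v : word r :=
  take (size v - size w1 - size w2) (drop (size w1) v).

Lemma mid_factorP w1 w2 w v : w1 ++ w ++ w2 = v -> w = mid_factor w1 w2 v.
Proof.
move=> <-; rewrite /mid_factor drop_size_cat // !size_cat.
have -> : (size w1 + (size w + size w2) - size w1 - size w2 = size w)%N by lia.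
by rewrite take_size_cat.
Qed.

Lemma coef_sandwich c w1 w2 f v :
  coef (sandwich c w1 w2 f) v =
  if w1 ++ mid_factor w1 w2 v ++ w2 == v then c * coef f (mid_factor w1 w2 v) else 0.
Proof.
rewrite /coef /sandwich big_map /=.
case: eqP => [Hv|Hv].
  rewrite mulr_sumr; apply: eq_bigl => x /=.
  by apply/eqP/eqP => [/mid_factorP|->].
by apply: big1 => x /eqP Hx; case: Hv; rewrite -(mid_factorP Hx).
Qed.

Lemma in_ideal_ext f h : (forall w, coef f w = coef h w) -> in_ideal f -> in_ideal h.
Proof. by move=> Efh [L [HL EL]]; exists L; split=> // w; rewrite -Efh. Qed.

Lemma in_ideal_cat f h : in_ideal f -> in_ideal h -> in_ideal (f ++ h).
Proof.
move=> [L1 [H1 E1]] [L2 [H2 E2]]; exists (L1 ++ L2); split.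
  by move=> e; rewrite mem_cat => /orP [/H1|/H2].
move=> w; rewrite coef_fcat E1 E2 map_cat flatten_cat coef_fcat //.
Qed.

Lemma in_ideal_sandwich c w1 w2 f : in_ideal f -> in_ideal (sandwich c w1 w2 f).
Proof.
move=> [L [HL EL]].
exists [seq ((c * e.1.1.1, w1 ++ e.1.1.2), e.1.2, e.2 ++ w2) | e <- L]; split.
  by move=> e /mapP [e' He' ->]; exact: HL He'.
set term := fun e : (C * word r) * fsum r * word r =>
  fmul (fone e.1.1.2) (fmul e.1.2 [:: (e.1.1.1, e.2)]).
have -> : flatten [seq term e
    | e <- [seq ((c * e.1.1.1, w1 ++ e.1.1.2), e.1.2, e.2 ++ w2) | e <- L]]
  = sandwich c w1 w2 (flatten [seq term e | e <- L]).
  rewrite /sandwich map_flatten -!map_comp; congr flatten; apply: eq_map => e /=.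
  rewrite /term !fmul_monomial !fmul1l -!map_comp; apply: eq_map => x /=.
  by rewrite !catA !mul1r mulrCA.
by move=> v; rewrite !coef_sandwich EL.
Qed.

Lemma in_ideal_rel f : is_rel f -> in_ideal f.
Proof.
move=> Hf; exists [:: ((1, [::]), f, [::])]; split=> [e|w].
  by rewrite inE => /eqP ->.
rewrite /= cats0 fmul_monomial fmul1l -map_comp /coef big_map /=.
by apply: eq_big => x /=; rewrite ?cats0 ?mul1r ?mulr1.
Qed.

Lemma eqU_coef f h : (forall w, coef f w = coef h w) -> eqU f h.
Proof.
move=> Efh; have : in_ideal ([::] : fsum r) by exists [::]; split=> // w; rewrite coef_fnil.
by apply: in_ideal_ext => w; rewrite coef_fnil coef_fcat coef_fneg Efh subrr.
Qed.

Lemma eqU_refl f : eqU f f.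
Proof. exact: eqU_coef. Qed.

Lemma eqU_trans f h k : eqU f h -> eqU h k -> eqU f k.
Proof.
move=> E1 E2; apply: in_ideal_ext (in_ideal_cat E1 E2) => w.
by rewrite !coef_fcat !coef_fneg addrA subrK.
Qed.

Lemma eqU_cat f f' h h' : eqU f f' -> eqU h h' -> eqU (f ++ h) (f' ++ h').
Proof.
move=> E1 E2; apply: in_ideal_ext (in_ideal_cat E1 E2) => w.
rewrite !coef_fcat !coef_fneg !coef_fcat; ring.
Qed.

Lemma eqU_sandwich c w1 w2 f h : eqU f h -> eqU (sandwich c w1 w2 f) (sandwich c w1 w2 h).
Proof.
move=> E; apply: in_ideal_ext (in_ideal_sandwich c w1 w2 E) => w.
rewrite coef_fcat coef_fneg !coef_sandwich coef_fcat coef_fneg.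
by case: ifP; rewrite ?mulrBr ?subr0.
Qed.

Lemma eqU_monomial c w1 w2 w f :
  eqU [:: (1, w)] f -> eqU [:: (c, w1 ++ w ++ w2)] (sandwich c w1 w2 f).
Proof.
move=> E; apply: eqU_trans (eqU_sandwich c w1 w2 E).
by rewrite /sandwich /= mulr1; apply: eqU_refl.
Qed.

Lemma eqU_scale c w w' : eqU [:: (1, w)] [:: (1, w')] -> eqU [:: (c, w)] [:: (c, w')].
Proof.
move=> E; have := eqU_monomial c [::] [::] E.
by rewrite /sandwich /= !cats0 mulr1.
Qed.

Section Expansion.
Variables (B : eqType) (G : B -> C * word r).

Definition expands (P : B -> Prop) f :=
  exists2 T : seq B, eqU f (map G T) & {in T, forall z, P z}.

Lemma expands_nil P : expands P [::].
Proof. by exists [::] => //; apply: eqU_refl. Qed.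

Lemma expands_term (P : B -> Prop) z : P z -> expands P [:: G z].
Proof. by exists [:: z]; [apply: eqU_refl | move=> z' /[!inE] /eqP ->]. Qed.

Lemma expands_eqU P f h : eqU f h -> expands P h -> expands P f.
Proof. by move=> E [T ET PT]; exists T => //; apply: eqU_trans ET. Qed.

Lemma expands_sub (P Q : B -> Prop) f :
  (forall z, P z -> Q z) -> expands P f -> expands Q f.
Proof. by move=> PQ [T ET PT]; exists T => // z /PT /PQ. Qed.

Lemma expands_cat P f h : expands P f -> expands P h -> expands P (f ++ h).
Proof.
move=> [T1 E1 P1] [T2 E2 P2]; exists (T1 ++ T2).
  by rewrite map_cat; apply: eqU_cat.
by move=> z; rewrite mem_cat => /orP [/P1|/P2].
Qed.

Lemma expands_map (A : eqType) P (F : A -> C * word r) (s : seq A) :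
  (forall a, a \in s -> expands P [:: F a]) -> expands P (map F s).
Proof.
elim: s => [|a s IH] Hs; first exact: expands_nil.
rewrite -cat1s map_cat; apply: expands_cat; first by apply: Hs; rewrite mem_head.
by apply: IH => a' Ha'; apply: Hs; rewrite inE Ha' orbT.
Qed.

End Expansion.

Lemma expands_trans (B B' : eqType) (G : B -> C * word r) (G' : B' -> C * word r)
    (P : B -> Prop) (Q : B' -> Prop) f :
  expands G P f -> (forall z, P z -> expands G' Q [:: G z]) -> expands G' Q f.
Proof.
move=> [T ET PT] HG; apply: expands_eqU ET _.
by apply: expands_map => z /PT; apply: HG.
Qed.

Lemma expands_sandwich (B B' : eqType) (G : B -> C * word r) (G' : B' -> C * word r)
    (P : B -> Prop) (Q : B' -> Prop) (phi : B -> B') c w1 w2 f :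
  (forall z, G' (phi z) = (c * (G z).1, w1 ++ (G z).2 ++ w2)) ->
  (forall z, P z -> Q (phi z)) ->
  expands G P f -> expands G' Q (sandwich c w1 w2 f).
Proof.
move=> EG PQ [T ET PT]; exists (map phi T); last first.
  by move=> _ /mapP [z Hz ->]; apply/PQ/PT.
apply: eqU_trans (eqU_sandwich c w1 w2 ET) _.
by rewrite /sandwich -!map_comp (eq_map EG); apply: eqU_refl.
Qed.

Lemma expands_monomial (B B' : eqType) (G : B -> C * word r) (G' : B' -> C * word r)
    (P : B -> Prop) (Q : B' -> Prop) (phi : B -> B') c w1 w2 w :
  (forall z, G' (phi z) = (c * (G z).1, w1 ++ (G z).2 ++ w2)) ->
  (forall z, P z -> Q (phi z)) ->
  expands G P [:: (1, w)] -> expands G' Q [:: (c, w1 ++ w ++ w2)].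
Proof.
move=> EG PQ /(expands_sandwich EG PQ (c := c) (w1 := w1) (w2 := w2)).
by rewrite /sandwich /= mulr1.
Qed.

End Ideal.

Section Relations.
Variable r : nat.
Implicit Types (w : word r) (A B : mx r).

Lemma eqU_bracket A B a b w1 w2 : is_sp A -> is_sp B ->
  eqU [:: (1, w1 ++ [:: (A, a); (B, b)] ++ w2)]
      [:: (1, w1 ++ [:: (B, b); (A, a)] ++ w2);
          (1, w1 ++ [:: (A *m B - B *m A, (a + b)%N)] ++ w2)].
Proof.
move=> spA spB; have Hrel : in_ideal (brel a b A B).
  by apply: in_ideal_rel; right; exists a, b, A, B.
by apply: in_ideal_ext (in_ideal_sandwich 1 w1 w2 Hrel) => w; rewrite /sandwich /= !mul1r.
Qed.

Lemma eqU_linear A B c k w1 w2 : is_sp A -> is_sp B ->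
  eqU [:: (1, w1 ++ [:: (c *: A + B, k)] ++ w2)]
      [:: (c, w1 ++ [:: (A, k)] ++ w2); (1, w1 ++ [:: (B, k)] ++ w2)].
Proof.
move=> spA spB; have Hrel : in_ideal (linrel k c A B).
  by apply: in_ideal_rel; left; exists k, c, A, B.
by apply: in_ideal_ext (in_ideal_sandwich 1 w1 w2 Hrel) => w; rewrite /sandwich /= !mul1r.
Qed.

Lemma is_sp0 : is_sp (0 : mx r).
Proof. by apply/forallP => p; apply/forallP => q; rewrite !mxE mulr0 eqxx. Qed.

Lemma eqU_zero_letter k w1 w2 : eqU [:: (1, w1 ++ [:: (0 : mx r, k)] ++ w2)] [::].
Proof.
have E := eqU_linear 1 k w1 w2 is_sp0 is_sp0; rewrite scale1r addr0 in E.
apply: in_ideal_ext (in_ideal_sandwich (-1) [::] [::] E) => w.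
rewrite coef_sandwich /= cats0.
have -> : mid_factor [::] [::] w = w by rewrite /mid_factor /= drop0 !subn0 take_size.
rewrite eqxx !coef_fcons !coef_fnil; case: eqP => _; ring.
Qed.

Lemma eqU_scale_letter A c k w1 w2 : is_sp A ->
  eqU [:: (1, w1 ++ [:: (c *: A, k)] ++ w2)] [:: (c, w1 ++ [:: (A, k)] ++ w2)].
Proof.
move=> spA; have E := eqU_linear c k w1 w2 spA is_sp0; rewrite addr0 in E.
apply: eqU_trans E _; rewrite -[X in eqU _ X]cats0 -cat1s.
exact: eqU_cat (eqU_refl _) (eqU_zero_letter _ _ _).
Qed.

End Relations.

Section Matrices.
Variable r : nat.

Definition emx (p q : nat) : mx r :=
  \matrix_(x, y) (((x : nat) == p) && ((y : nat) == q))%:R.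

Definition ppos (a : nat) := (a - 1)%N.
Definition npos (a : nat) := (r.*2 - a)%N.

Lemma pos_ppos a : (0 < a)%N -> pos r (zi a) = ppos a.
Proof. by []. Qed.

Lemma pos_npos a : (0 < a)%N -> pos r (- zi a) = npos a.
Proof.
move=> Ha; rewrite /pos /zi abszN /=.
by case: a Ha.
Qed.

Lemma emx_mul p q q' s :
  emx p q *m emx q' s = ((q == q') && (q < r.*2)%N)%:R *: emx p s.
Proof.
apply/matrixP => x y; rewrite !mxE.
case: (ltnP q r.*2) => Hq; last first.
  rewrite andbF mul0r big1 // => k _; rewrite !mxE.
  have -> : ((k : nat) == q) = false by apply/negbTE; rewrite neq_ltn (leq_trans (ltn_ord k) Hq).
  by rewrite andbF mul0r.
rewrite (bigD1 (Ordinal Hq)) //= big1 ?addr0; last first.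
  move=> k /negbTE Hk; rewrite !mxE.
  have -> : ((k : nat) == q) = false.
    by apply/negbTE; apply: contraFN Hk => /eqP E; apply/eqP/val_inj.
  by rewrite andbF mul0r.
rewrite !mxE eqxx andbT andbT /=.
by case: (_ == p); case: (q == q'); case: (_ == s); rewrite /= ?mulr1 ?mulr0 ?mul0r ?mul1r.
Qed.

Lemma ppos_lt a : (0 < a)%N -> (a <= r)%N -> (ppos a < r.*2)%N = true.
Proof. rewrite /ppos; lia. Qed.
Lemma npos_lt a : (0 < a)%N -> (a <= r)%N -> (npos a < r.*2)%N = true.
Proof. rewrite /npos; lia. Qed.
Lemma eq_ppos a b : (0 < a)%N -> (0 < b)%N -> (ppos a == ppos b) = (a == b).
Proof. rewrite /ppos => Ha Hb; apply/eqP/eqP; lia. Qed.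
Lemma eq_npos a b : (a <= r)%N -> (b <= r)%N -> (npos a == npos b) = (a == b).
Proof. rewrite /npos => Ha Hb; apply/eqP/eqP; lia. Qed.
Lemma eq_ppos_npos a b : (0 < a)%N -> (a <= r)%N -> (b <= r)%N -> (ppos a == npos b) = false.
Proof. rewrite /ppos /npos => Ha Hb Hc; apply/eqP; lia. Qed.
Lemma eq_npos_ppos a b : (0 < b)%N -> (a <= r)%N -> (b <= r)%N -> (npos a == ppos b) = false.
Proof. rewrite /ppos /npos => Ha Hb Hc; apply/eqP; lia. Qed.

Lemma xplusE a : (0 < a)%N -> (a <= r)%N ->
  xplus r a = if (a < r)%N then emx (ppos a) (npos r) + emx (ppos r) (npos a)
              else emx (ppos r) (npos r).
Proof.
move=> Ha Har; have Hr : (0 < r)%N by lia.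
by rewrite /xplus /E !pos_ppos // !pos_npos.
Qed.

Lemma xminus_rootE i j : (0 < i)%N ->
  xminus_root r i j = emx (ppos j.+1) (ppos i) - emx (npos i) (npos j.+1).
Proof. by move=> Hi; rewrite /xminus_root /E !pos_ppos // !pos_npos. Qed.

Lemma xminus_barE i j : (0 < i)%N -> (0 < j)%N ->
  xminus_bar r i j = if (i < j)%N then emx (npos j) (ppos i) + emx (npos i) (ppos j)
                     else emx (npos i) (ppos i).
Proof. by move=> Hi Hj; rewrite /xminus_bar /E !pos_ppos // !pos_npos. Qed.

Ltac expand_products := rewrite ?mulmxDl ?mulmxDr ?mulmxBl ?mulmxBr ?mulmxN ?mulNmx ?emx_mul.
Ltac simplify_units :=
  rewrite ?eq_npos_ppos ?eq_ppos_npos ?eq_ppos ?eq_npos ?ppos_lt ?npos_lt //=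
          ?mulr0n ?mulr1n ?scale0r ?scale1r ?add0r ?addr0 ?subr0 ?sub0r ?oppr0 //.

Lemma xplus_xplus_bracket a b : (0 < a)%N -> (a <= r)%N -> (0 < b)%N -> (b <= r)%N ->
  xplus r a *m xplus r b - xplus r b *m xplus r a = 0.
Proof.
move=> Ha Har Hb Hbr; have Hrr : (r <= r)%N by [].
have Hr : (0 < r)%N by lia.
rewrite !xplusE //; case: ifP => _; case: ifP => _; expand_products; simplify_units.
Qed.

Lemma xplus_xminus_root_bracket a i j :
  (0 < a)%N -> (a <= r)%N -> (0 < i)%N -> (i <= j)%N -> (j < r)%N ->
  xplus r a *m xminus_root r i j - xminus_root r i j *m xplus r a =
  (if a == i then - (if (j.+1 < r)%N then 1 else 2%:R) else 0) *: xplus r j.+1.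
Proof.
move=> Ha Har Hi Hij Hjr; have Hrr : (r <= r)%N by [].
have Hr : (0 < r)%N by lia.
have Hir : (i <= r)%N by lia.
have Hj0 : (0 < j.+1)%N by [].
have Hir' : (i == r) = false by apply/eqP; lia.
have Hri' : (r == i) = false by apply/eqP; lia.
rewrite xminus_rootE // !xplusE //.
case Haq: (a < r)%N; case Hjq: (j.+1 < r)%N; expand_products; simplify_units.
all: rewrite ?Hir' ?Hri' /= ?scale0r ?add0r ?addr0 ?oppr0 ?sub0r.
all: case: (a =P i) => [Hai|/eqP Hai];
  [subst a; rewrite ?eqxx | rewrite ?(negbTE Hai) ?(eq_sym i a) ?(negbTE Hai)].
all: rewrite /= ?scale0r ?scale1r ?add0r ?addr0 ?subr0 ?oppr0 ?sub0r //.
- by rewrite scaleN1r opprD addrC.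
- have Hjr' : j.+1 = r by lia.
  by rewrite Hjr' scaleNr scaler_nat mulr2n opprD.
- exfalso; lia.
- exfalso; lia.
Qed.

Lemma xplus_xminus_bar_bracket a i j :
  (0 < a)%N -> (a <= r)%N -> (0 < i)%N -> (i <= j)%N -> (j < r)%N ->
  xplus r a *m xminus_bar r i j - xminus_bar r i j *m xplus r a =
  if a == i then xminus_root r j (r - 1) else if a == j then xminus_root r i (r - 1) else 0.
Proof.
move=> Ha Har Hi Hij Hjr; have Hrr : (r <= r)%N by [].
have Hr : (0 < r)%N by lia.
have Hir : (i <= r)%N by lia.
have Hj : (0 < j)%N by lia.
have Hjr2 : (j <= r)%N by lia.
have Hr1 : (r - 1).+1 = r by lia.
have Hir' : (i == r) = false by apply/eqP; lia.
have Hri' : (r == i) = false by apply/eqP; lia.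
have Hjr' : (j == r) = false by apply/eqP; lia.
have Hrj' : (r == j) = false by apply/eqP; lia.
rewrite xminus_barE // !xminus_rootE // Hr1 !xplusE //.
case Haq: (a < r)%N; case Hijq: (i < j)%N; expand_products; simplify_units.
all: rewrite ?Hir' ?Hri' ?Hjr' ?Hrj' /= ?scale0r ?add0r ?addr0 ?oppr0 ?sub0r.
all: case: (a =P i) => [Hai|/eqP Hai];
  [subst a; rewrite ?eqxx | rewrite ?(negbTE Hai) ?(eq_sym i a) ?(negbTE Hai)].
all: rewrite /= ?scale0r ?scale1r ?add0r ?addr0 ?subr0 ?oppr0 ?sub0r //.
all: try (case: (a =P j) => [Haj|/eqP Haj];
  [subst a; rewrite ?eqxx | rewrite ?(negbTE Haj) ?(eq_sym j a) ?(negbTE Haj)]).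
all: rewrite /= ?scale0r ?scale1r ?add0r ?addr0 ?subr0 ?oppr0 ?sub0r //.
all: first [ by exfalso; lia | idtac ].
all: case: (eqVneq i j) => [Heq|Hne]; [subst j | rewrite ?(negbTE Hne) ?(eq_sym j i) ?(negbTE Hne)].
all: rewrite /= ?eqxx ?scale0r ?scale1r ?add0r ?addr0 ?oppr0 ?sub0r ?subr0 //.
all: try (exfalso; lia).
Qed.

Definition sp_conj (A : mx r) : mx r :=
  \matrix_(p, q) (- (sgnp p * sgnp q) * A (rev_ord q) (rev_ord p)).

Lemma is_spE (A : mx r) : is_sp A = (A == sp_conj A).
Proof.
apply/idP/eqP => [H|H].
  apply/matrixP => p q; rewrite mxE.
  by move/forallP: H => /(_ p) /forallP /(_ q) /eqP.
apply/forallP => p; apply/forallP => q; apply/eqP.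
by rewrite {1}H mxE.
Qed.

Lemma sp_conjD (A B : mx r) : sp_conj (A + B) = sp_conj A + sp_conj B.
Proof. by apply/matrixP => p q; rewrite !mxE mulrDr. Qed.
Lemma sp_conjN (A : mx r) : sp_conj (- A) = - sp_conj A.
Proof. by apply/matrixP => p q; rewrite !mxE mulrN. Qed.
Lemma sp_conjB (A B : mx r) : sp_conj (A - B) = sp_conj A - sp_conj B.
Proof. by rewrite sp_conjD sp_conjN. Qed.

Definition sgn_at (z : nat) : C := if (z < r)%N then 1 else -1.

Lemma sp_conj_emx x y : (x < r.*2)%N -> (y < r.*2)%N ->
  sp_conj (emx x y) = (- (sgn_at x * sgn_at y)) *: emx (r.*2 - y.+1)%N (r.*2 - x.+1)%N.
Proof.
move=> Hx Hy; apply/matrixP => p q; rewrite !mxE /=.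
have Hp := ltn_ord p; have Hq := ltn_ord q.
case: (eqVneq (p : nat) (r.*2 - y.+1)%N) => [Hpy|/eqP Hpy].
  have -> : (r.*2 - p.+1 == y)%N by apply/eqP; lia.
  case: (eqVneq (q : nat) (r.*2 - x.+1)%N) => [Hqx|/eqP Hqx].
    have -> : (r.*2 - q.+1 == x)%N by apply/eqP; lia.
    rewrite /= mulr1 /sgnp /sgn_at mulr1.
    case: (ltnP p r) => H1; case: (ltnP q r) => H2; case: (ltnP x r) => H3;
      case: (ltnP y r) => H4; try (exfalso; lia); rewrite ?mulN1r ?mul1r ?mulrN1 ?opprK //.
  have -> : (r.*2 - q.+1 == x)%N = false by apply/eqP; lia.
  by rewrite /= !mulr0.
have -> : (r.*2 - p.+1 == y)%N = false by apply/eqP; lia.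
by rewrite /= andbF !mulr0.
Qed.

Lemma sgn_ppos a : (0 < a)%N -> (a <= r)%N -> sgn_at (ppos a) = 1.
Proof. by move=> Ha Hb; rewrite /sgn_at /ppos; case: ltnP => //; lia. Qed.
Lemma sgn_npos a : (0 < a)%N -> (a <= r)%N -> sgn_at (npos a) = -1.
Proof. by move=> Ha Hb; rewrite /sgn_at /npos; case: ltnP => //; lia. Qed.
Lemma mirror_ppos a : (0 < a)%N -> (a <= r)%N -> (r.*2 - (ppos a).+1)%N = npos a.
Proof. rewrite /ppos /npos; lia. Qed.
Lemma mirror_npos a : (0 < a)%N -> (a <= r)%N -> (r.*2 - (npos a).+1)%N = ppos a.
Proof. rewrite /ppos /npos; lia. Qed.

Lemma sp_conj_ppos_npos a b : (0 < a)%N -> (a <= r)%N -> (0 < b)%N -> (b <= r)%N ->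
  sp_conj (emx (ppos a) (npos b)) = emx (ppos b) (npos a).
Proof.
move=> *; rewrite sp_conj_emx ?ppos_lt ?npos_lt //.
rewrite sgn_ppos // sgn_npos // mirror_ppos // mirror_npos //.
by rewrite mulrN1 opprK scale1r.
Qed.
Lemma sp_conj_ppos_ppos a b : (0 < a)%N -> (a <= r)%N -> (0 < b)%N -> (b <= r)%N ->
  sp_conj (emx (ppos a) (ppos b)) = - emx (npos b) (npos a).
Proof.
move=> *; rewrite sp_conj_emx ?ppos_lt ?npos_lt // !sgn_ppos // !mirror_ppos //.
by rewrite mulr1 scaleN1r.
Qed.
Lemma sp_conj_npos_npos a b : (0 < a)%N -> (a <= r)%N -> (0 < b)%N -> (b <= r)%N ->
  sp_conj (emx (npos a) (npos b)) = - emx (ppos b) (ppos a).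
Proof.
move=> *; rewrite sp_conj_emx ?ppos_lt ?npos_lt // !sgn_npos // !mirror_npos //.
by rewrite mulrN1 opprK scaleN1r.
Qed.
Lemma sp_conj_npos_ppos a b : (0 < a)%N -> (a <= r)%N -> (0 < b)%N -> (b <= r)%N ->
  sp_conj (emx (npos a) (ppos b)) = emx (npos b) (ppos a).
Proof.
move=> *; rewrite sp_conj_emx ?ppos_lt ?npos_lt //.
rewrite sgn_ppos // sgn_npos // mirror_ppos // mirror_npos //.
by rewrite mulr1 opprK scale1r.
Qed.

Lemma is_sp_xplus a : (0 < a)%N -> (a <= r)%N -> is_sp (xplus r a).
Proof.
move=> Ha Har; have Hr : (0 < r)%N by lia.
have Hrr : (r <= r)%N by [].
rewrite is_spE xplusE //; apply/eqP.
case: ifP => _; rewrite ?sp_conjD !sp_conj_ppos_npos //; by rewrite addrC.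
Qed.

Lemma is_sp_xminus_root i j : (0 < i)%N -> (i <= j)%N -> (j < r)%N -> is_sp (xminus_root r i j).
Proof.
move=> Hi Hij Hjr; have Hir : (i <= r)%N by lia.
rewrite is_spE xminus_rootE //; apply/eqP.
rewrite sp_conjB sp_conj_ppos_ppos // sp_conj_npos_npos //.
by rewrite opprK addrC.
Qed.

Lemma is_sp_xminus_bar i j : (0 < i)%N -> (i <= j)%N -> (j < r)%N -> is_sp (xminus_bar r i j).
Proof.
move=> Hi Hij Hjr; have Hir : (i <= r)%N by lia.
have Hj : (0 < j)%N by lia. have Hjr' : (j <= r)%N by lia.
rewrite is_spE xminus_barE //; apply/eqP.
case: ifP => _; rewrite ?sp_conjD !sp_conj_npos_ppos //; by rewrite addrC.
Qed.

End Matrices.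

Section Potential.
Variable r : nat.

(* [(b, i, j)] stands for [x^-_{i,\bar j}] if [b], and for [x^-_{i,j}] otherwise *)
Definition nroot := (bool * nat * nat)%type.

Definition nroot_mx (y : nroot) : mx r :=
  if y.1.1 then xminus_bar r y.1.2 y.2 else xminus_root r y.1.2 y.2.

Definition nroot_valid (y : nroot) : bool := (0 < y.1.2 <= y.2)%N && (y.2 < r)%N.

(* [(a, k)] stands for [x^+_{a,r} (x) t^k] *)
Definition xroot_valid (x : nat * nat) : bool := (0 < x.1 <= r)%N && (0 < x.2)%N.

Definition xminus_seq (u : seq (nroot * nat)) : word r := [seq (nroot_mx y.1, y.2) | y <- u].
Definition xplus_seq (X : seq (nat * nat)) : word r := [seq (xplus r x.1, x.2) | x <- X].

Definition tail_degree t (M : seq (nat * nat)) := sumn [seq q.2 | q <- M & (t <= q.1)%N].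

Definition dominates M M' := forall t, (tail_degree t M' <= tail_degree t M)%N.
Definition sdominates M M' := dominates M M' /\ exists t, (tail_degree t M' < tail_degree t M)%N.

(* A letter [x^-_{i,r-1} t^l] is charged like [x^+_{r,r} t^l]: bracketing with [x^+_{i,r}]
   turns it into [x^+_{r,r}], and it is itself the bracket of some [x^+_{a,r}] with an
   [x^-_{_,\bar _}]. *)
Definition charge (y : nroot * nat) : seq (nat * nat) :=
  if ~~ y.1.1.1 && (y.1.2.+1 == r) then [:: (r, y.2)] else [::].

Definition charges u := flatten (map charge u).
Definition potential u X := charges u ++ X.

(* The invariant of every term [x^-(u') x^+(X')] produced by normal-ordering [x^+(X) x^-(u)] *)
Definition improves u' X' u X :=
  [/\ all (fun y => nroot_valid y.1) u', all xroot_valid X',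
      dominates (potential u' X') (potential u X) &
      u' = [::] -> u <> [::] -> sdominates (potential u' X') (potential u X)].

Lemma tail_degree_cat t M M' : tail_degree t (M ++ M') = (tail_degree t M + tail_degree t M')%N.
Proof. by rewrite /tail_degree filter_cat map_cat sumn_cat. Qed.

Lemma tail_degree_nil t : tail_degree t [::] = 0%N.
Proof. by []. Qed.

Lemma tail_degree_cons t p v M :
  tail_degree t ((p, v) :: M) = ((if (t <= p)%N then v else 0) + tail_degree t M)%N.
Proof. by rewrite /tail_degree /=; case: ifP. Qed.

Lemma tail_degree_rcons t M x :
  tail_degree t (rcons M x) = (tail_degree t M + tail_degree t [:: x])%N.
Proof. by rewrite -cats1 tail_degree_cat. Qed.

Lemma charges_cat u v : charges (u ++ v) = charges u ++ charges v.
Proof. by rewrite /charges map_cat flatten_cat. Qed.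

Lemma charges1 y : charges [:: y] = charge y.
Proof. by rewrite /charges /= cats0. Qed.

Lemma tail_potential t u X :
  tail_degree t (potential u X) = (tail_degree t (charges u) + tail_degree t X)%N.
Proof. exact: tail_degree_cat. Qed.

Lemma dominates_trans M1 M2 M3 : dominates M1 M2 -> dominates M2 M3 -> dominates M1 M3.
Proof. by move=> H12 H23 t; apply: leq_trans (H23 t) (H12 t). Qed.

Lemma dominates_sdominates_trans M1 M2 M3 :
  dominates M1 M2 -> sdominates M2 M3 -> sdominates M1 M3.
Proof.
move=> H12 [H23 [t Ht]]; split; first exact: dominates_trans H12 H23.
by exists t; apply: leq_trans Ht (H12 t).
Qed.

Lemma improves_refl X : all xroot_valid X -> improves [::] X [::] X.
Proof. by split. Qed.

Lemma improves_rcons u' X' u X x : xroot_valid x ->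
  improves u' X' u X -> improves u' (rcons X' x) u (rcons X x).
Proof.
have domr M M' : dominates M M' -> dominates (rcons M x) (rcons M' x).
  by move=> H t; rewrite !tail_degree_rcons leq_add2r.
move=> Hx [V1 V2 V3 V4]; rewrite /improves /potential -!rcons_cat all_rcons Hx.
split=> //; first exact: domr.
move=> Hu' Hu; have [Hd [t Ht]] := V4 Hu' Hu; split; first exact: domr.
by exists t; rewrite !tail_degree_rcons ltn_add2r.
Qed.

Lemma improves_sdominated u' X' u1 X1 u X :
  sdominates (potential u1 X1) (potential u X) -> improves u' X' u1 X1 -> improves u' X' u X.
Proof.
move=> Hs [V1 V2 V3 V4]; have Hd := dominates_sdominates_trans V3 Hs.
by split=> //; case: Hd.
Qed.

Lemma improves_cat u0' X0' u0 X u1 X1 y :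
  improves u0' X0' u0 X -> improves u1 X1 [:: y] X0' ->
  improves (u0' ++ u1) X1 (rcons u0 y) X.
Proof.
move=> [V1 V2 V3 V4] [W1 W2 W3 W4].
have tailE t : tail_degree t (potential (rcons u0 y) X)
    = (tail_degree t (charges u0) + tail_degree t (charge y) + tail_degree t X)%N.
  by rewrite -cats1 tail_potential charges_cat tail_degree_cat charges1.
have tailE' t : tail_degree t (potential (u0' ++ u1) X1)
    = (tail_degree t (charges u0') + tail_degree t (potential u1 X1))%N.
  by rewrite /potential charges_cat -catA tail_degree_cat.
have Hd : dominates (potential (u0' ++ u1) X1) (potential (rcons u0 y) X).
  move=> t; move: (V3 t) (W3 t); rewrite tailE tailE' !tail_potential charges1; lia.
split=> //; first by rewrite all_cat V1 W1.
move=> /nilP; rewrite cat_nilp => /andP [/nilP u0'0 /nilP u10] _.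
have [_ [t Ht]] := W4 u10 (fun e => ltac:(discriminate e)).
split=> //; exists t; move: (V3 t) Ht.
by rewrite tailE tailE' u0'0 !tail_potential charges1; lia.
Qed.

End Potential.

Section NormalOrder.
Variable r : nat.

Definition nterm := (C * seq (nroot * nat) * seq (nat * nat))%type.

Definition nterm_val (z : nterm) : C * word r :=
  (z.1.1, xminus_seq r z.1.2 ++ xplus_seq r z.2).

Definition improves_term u X (z : nterm) := improves r z.1.2 z.2 u X.

Notation normal_expands u X := (expands nterm_val (improves_term u X)).

Lemma is_sp_nroot y : nroot_valid r y -> is_sp (nroot_mx r y).
Proof.
case: y => [[[] i] j] /andP [/andP [Hi Hij] Hjr].
  exact: is_sp_xminus_bar.
exact: is_sp_xminus_root.
Qed.

Lemma is_sp_xroot x : xroot_valid r x -> is_sp (xplus r x.1).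
Proof. by case/andP => /andP [Ha Har] _; apply: is_sp_xplus. Qed.

Lemma normal_expands_zero u X X1 k :
  normal_expands u X [:: (1, xplus_seq r X1 ++ [:: (0 : mx r, k)])].
Proof.
apply: expands_eqU (expands_nil _ _).
by have := eqU_zero_letter k (xplus_seq r X1) [::]; rewrite cats0.
Qed.

Lemma bracket_xminus_bar X1 a k i j l :
  (forall y' l', nroot_valid r y' ->
     normal_expands [:: (y', l')] X1 [:: (1, xplus_seq r X1 ++ [:: (nroot_mx r y', l')])]) ->
  xroot_valid r (a, k) -> nroot_valid r (true, i, j) ->
  normal_expands [:: ((true, i, j), l)] (rcons X1 (a, k))
    [:: (1, xplus_seq r X1 ++
        [:: (xplus r a *m xminus_bar r i j - xminus_bar r i j *m xplus r a, (k + l)%N)])].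
Proof.
move=> IH; rewrite /xroot_valid /nroot_valid /=.
move=> /andP [/andP [Ha Har] Hk] /andP [/andP [Hi Hij] Hjr].
rewrite xplus_xminus_bar_bracket //.
(* the bracket is [x^-_{i',r-1} t^(k+l)], charged at [r > a] with more than the [k] it replaces *)
have step i' : (0 < i')%N -> (i' < r)%N -> (a < r)%N ->
    normal_expands [:: ((true, i, j), l)] (rcons X1 (a, k))
      [:: (1, xplus_seq r X1 ++ [:: (xminus_root r i' (r - 1), (k + l)%N)])].
  move=> Hi' Hi'r Har'; have Hr1 : (r - 1).+1 = r by lia.
  have Hy' : nroot_valid r (false, i', (r - 1)%N) by rewrite /nroot_valid /=; lia.
  apply: expands_sub (IH _ (k + l)%N Hy') => z; apply: improves_sdominated.
  rewrite /potential /charges /= /charge /= Hr1 eqxx /=; split.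
    move=> t; rewrite tail_degree_rcons !tail_degree_cons tail_degree_nil.
    by case: (leqP t a); case: (leqP t r); lia.
  exists r; rewrite tail_degree_rcons !tail_degree_cons tail_degree_nil leqnn.
  by case: (leqP r a); lia.
case: eqP => [Hai|Hai]; first by apply: step; lia.
case: eqP => [Haj|Haj]; first by apply: step; lia.
exact: normal_expands_zero.
Qed.

Lemma bracket_xminus_root X1 a k i j l :
  all (xroot_valid r) X1 -> xroot_valid r (a, k) -> nroot_valid r (false, i, j) ->
  normal_expands [:: ((false, i, j), l)] (rcons X1 (a, k))
    [:: (1, xplus_seq r X1 ++
        [:: (xplus r a *m xminus_root r i j - xminus_root r i j *m xplus r a, (k + l)%N)])].
Proof.
move=> HX1; rewrite /xroot_valid /nroot_valid /=.
move=> /andP [/andP [Ha Har] Hk] /andP [/andP [Hi Hij] Hjr].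
rewrite xplus_xminus_root_bracket //.
case: eqP => [Hai|_]; last by rewrite scale0r; apply: normal_expands_zero.
subst a; set c := - _.
have spj : is_sp (xplus r j.+1) by apply: is_sp_xplus; lia.
have := eqU_scale_letter c (k + l) (xplus_seq r X1) [::] spj.
rewrite !cats0 => /expands_eqU; apply.
(* the letter [x^+_{i,r} t^k] is replaced by [x^+_{j+1,r} t^(k+l)], with [j + 1 > i] *)
have Hz : improves_term [:: ((false, i, j), l)] (rcons X1 (i, k))
                        (c, [::], rcons X1 (j.+1, (k + l)%N)).
  have tailE t : tail_degree t (potential r [:: ((false, i, j), l)] (rcons X1 (i, k)))
      = ((if j.+1 == r then (if (t <= r)%N then l else 0) else 0)
         + tail_degree t X1 + (if (t <= i)%N then k else 0))%N.
    rewrite tail_potential charges1 /charge /= tail_degree_rcons.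
    by case: ifP => _; rewrite ?tail_degree_cons ?tail_degree_nil; lia.
  have tailE' t : tail_degree t (potential r [::] (rcons X1 (j.+1, (k + l)%N)))
      = (tail_degree t X1 + (if (t <= j.+1)%N then k + l else 0))%N.
    by rewrite tail_potential tail_degree_rcons tail_degree_cons tail_degree_nil addn0.
  have Hd : dominates (potential r [::] (rcons X1 (j.+1, (k + l)%N)))
                      (potential r [:: ((false, i, j), l)] (rcons X1 (i, k))).
    move=> t; rewrite tailE tailE'.
    by case: eqP => Ej; case: (leqP t i); case: (leqP t r); case: (leqP t j.+1); lia.
  split=> //=; first by rewrite all_rcons HX1 /xroot_valid /=; lia.
  move=> _ _; split=> //; exists j.+1; rewrite tailE tailE' leqnn.
  by case: eqP => Ej; case: (leqP j.+1 i); case: (leqP j.+1 r); lia.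
have -> : [:: (c, xplus_seq r X1 ++ [:: (xplus r j.+1, (k + l)%N)])]
  = [:: nterm_val (c, [::], rcons X1 (j.+1, (k + l)%N))].
  by rewrite /nterm_val /xplus_seq map_rcons cats1.
exact: expands_term.
Qed.

Lemma normal_order_letter X y l : all (xroot_valid r) X -> nroot_valid r y ->
  normal_expands [:: (y, l)] X [:: (1, xplus_seq r X ++ [:: (nroot_mx r y, l)])].
Proof.
elim/last_ind: X y l => [|X1 [a k] IH] y l.
  move=> _ Hy; have Hz : improves_term [:: (y, l)] [::] (1, [:: (y, l)], [::]).
    by split=> //=; rewrite Hy.
  by have := expands_term nterm_val Hz; rewrite /nterm_val /=.
rewrite all_rcons => /andP [Hx HX1] Hy.
have -> : xplus_seq r (rcons X1 (a, k)) ++ [:: (nroot_mx r y, l)]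
  = xplus_seq r X1 ++ [:: (xplus r a, k); (nroot_mx r y, l)] ++ [::].
  by rewrite /xplus_seq map_rcons cats0 -cats1 -catA.
apply: expands_eqU (eqU_bracket k l _ _ (is_sp_xroot Hx) (is_sp_nroot Hy)) _.
rewrite !cats0; apply: (expands_cat (f := [:: _]) (h := [:: _])).
  rewrite -[_ ++ [:: _; _]]/([::] ++ _) -[[:: _; _]]/([:: _] ++ [:: _]) (catA (xplus_seq r X1)).
  apply: (expands_monomial (phi := fun z : nterm => (z.1.1, z.1.2, rcons z.2 (a, k))))
    (IH y l HX1 Hy) => [z|z]; last exact: improves_rcons.
  by rewrite /nterm_val /xplus_seq /= map_rcons -cats1 mul1r !catA.
case: y Hy => [[[] i] j] Hy.
  by apply: bracket_xminus_bar => // y' l' Hy'; apply: IH.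
exact: bracket_xminus_root.
Qed.

Lemma normal_order X u : all (xroot_valid r) X -> all (fun y => nroot_valid r y.1) u ->
  normal_expands u X [:: (1, xplus_seq r X ++ xminus_seq r u)].
Proof.
move=> HX; elim/last_ind: u => [|u0 [y l] IH].
  have Hz : improves_term [::] X (1, [::], X) by exact: improves_refl.
  by move=> _; have := expands_term nterm_val Hz; rewrite /nterm_val /= cats0.
rewrite all_rcons => /andP [Hy /IH [T0 E0 G0]].
have -> : xplus_seq r X ++ xminus_seq r (rcons u0 (y, l))
  = [::] ++ (xplus_seq r X ++ xminus_seq r u0) ++ [:: (nroot_mx r y, l)].
  by rewrite cat0s -catA /xminus_seq map_rcons cats1.
apply: expands_eqU (eqU_monomial 1 [::] [:: (nroot_mx r y, l)] E0) _.
rewrite /sandwich -map_comp; apply: expands_map => z /G0 Gz /=.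
have [_ Hz _ _] := Gz.
rewrite mul1r -catA -[xplus_seq r z.2 ++ _]cats0.
apply: (expands_monomial (w2 := [::])
         (phi := fun z' : nterm => (z.1.1 * z'.1.1, z.1.2 ++ z'.1.2, z'.2)))
  (normal_order_letter l Hz Hy) => [z'|z' Hz'].
  by rewrite /nterm_val cats0 /xminus_seq map_cat catA.
exact: improves_cat Gz Hz'.
Qed.

End NormalOrder.

Section Reorder.
Variable r : nat.

Lemma eqU_xplus_swap x y w1 w2 : xroot_valid r x -> xroot_valid r y ->
  eqU [:: (1, w1 ++ [:: (xplus r x.1, x.2); (xplus r y.1, y.2)] ++ w2)]
      [:: (1, w1 ++ [:: (xplus r y.1, y.2); (xplus r x.1, x.2)] ++ w2)].
Proof.
move=> Hx Hy; apply: eqU_trans (eqU_bracket _ _ w1 w2 (is_sp_xroot Hx) (is_sp_xroot Hy)) _.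
move: Hx Hy => /andP [/andP [Ha Har] _] /andP [/andP [Hb Hbr] _].
rewrite xplus_xplus_bracket // -[X in eqU _ X]cats0 -cat1s.
exact: eqU_cat (eqU_refl _) (eqU_zero_letter _ _ _).
Qed.

Lemma eqU_xplus_move x Y w1 w2 : xroot_valid r x -> all (xroot_valid r) Y ->
  eqU [:: (1, w1 ++ [:: (xplus r x.1, x.2)] ++ xplus_seq r Y ++ w2)]
      [:: (1, w1 ++ xplus_seq r Y ++ [:: (xplus r x.1, x.2)] ++ w2)].
Proof.
move=> Hx; elim: Y w1 => [|y Y IH] w1 /=; first by move=> _; apply: eqU_refl.
case/andP => Hy HY; apply: eqU_trans (eqU_xplus_swap w1 (xplus_seq r Y ++ w2) Hx Hy) _.
by have := IH (w1 ++ [:: (xplus r y.1, y.2)]) HY; rewrite -!catA.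
Qed.

Lemma eqU_xplus_perm X X' w1 w2 : all (xroot_valid r) X -> perm_eq X X' ->
  eqU [:: (1, w1 ++ xplus_seq r X ++ w2)] [:: (1, w1 ++ xplus_seq r X' ++ w2)].
Proof.
elim: X X' w1 => [|x X IH] X' w1 HX Hp.
  by move: Hp; rewrite perm_sym => /perm_nilP ->; apply: eqU_refl.
case/andP: HX => Hx HX.
have Hin : x \in X' by rewrite -(perm_mem Hp) mem_head.
case/splitPr: Hin Hp => X1 X2 Hp.
have Hp' : perm_eq X (X1 ++ X2).
  by rewrite -(perm_cons x) (perm_trans Hp) // -cat1s perm_catCA.
have /allP HX12 : all (xroot_valid r) (X1 ++ X2) by rewrite -(perm_all _ Hp').
have HX1 : all (xroot_valid r) X1 by apply/allP => y Hy; apply: HX12; rewrite mem_cat Hy.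
have := IH _ (w1 ++ [:: (xplus r x.1, x.2)]) HX Hp'; rewrite -!catA => /eqU_trans; apply.
have := eqU_xplus_move w1 (xplus_seq r X2 ++ w2) Hx HX1.
by rewrite /xplus_seq !map_cat /= -!catA.
Qed.

End Reorder.

Section Canonical.
Variable r : nat.

Lemma nroot_mx_basis y : nroot_valid r y -> nroot_mx r y \in nminus_basis r.
Proof.
rewrite /nroot_valid /nroot_mx => /andP [/andP [Hi Hij] Hjr].
apply/flatten_mapP; exists y.1.2; first by rewrite mem_iota; lia.
apply/flatten_mapP; exists y.2; first by rewrite mem_iota; lia.
by case: ifP => _; rewrite !inE eqxx ?orbT.
Qed.

Lemma nminus_basis_nroot A : A \in nminus_basis r -> exists y, nroot_valid r y /\ nroot_mx r y = A.
Proof.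
case/flatten_mapP => i; rewrite mem_iota => /andP [Hi1 Hi2].
case/flatten_mapP => j; rewrite mem_iota => /andP [Hj1 Hj2].
rewrite !inE => /orP [/eqP ->|/eqP ->].
  by exists (false, i, j); split => //; rewrite /nroot_valid /=; lia.
by exists (true, i, j); split => //; rewrite /nroot_valid /=; lia.
Qed.

Lemma nminus_word_xminus_seq (w : word r) :
  nminus_word w -> exists u, all (fun p => nroot_valid r p.1) u /\ w = xminus_seq r u.
Proof.
elim: w => [|[A k] w IH] /=; first by exists [::].
move=> /andP [HA Hw]; have [u [Hu ->]] := IH Hw.
have [y [Hy <-]] := nminus_basis_nroot HA.
by exists ((y, k) :: u); split => //=; rewrite Hy.
Qed.

Lemma xminus_seq_nminus_word u : all (fun p => nroot_valid r p.1) u -> nminus_word (xminus_seq r u).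
Proof.
elim: u => [|[y k] u IH] //= /andP [Hy Hu].
by rewrite nroot_mx_basis // IH.
Qed.

Lemma enumI : Finite.enum 'I_r = index_enum 'I_r.
Proof. by rewrite /index_enum unlock. Qed.

Definition xroots (p : {ffun 'I_r -> seq nat}) : seq (nat * nat) :=
  flatten [seq [seq (i.+1, k) | k <- p i] | i : 'I_r <- enum 'I_r].

Lemma xword_xplus_seq p : xword p = xplus_seq r (xroots p).
Proof.
rewrite /xword /xplus_seq /xroots map_flatten -map_comp; congr flatten; apply: eq_map => i /=.
by rewrite -map_comp.
Qed.

Lemma xroots_valid p : isFr p -> all (xroot_valid r) (xroots p).
Proof.
move=> Hp; apply/allP => q /flatten_mapP [i _ /mapP [k Hk ->]].
move: (Hp i); rewrite /isFplus => /andP [_ /allP /(_ k Hk) Hk0].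
by rewrite /xroot_valid /= Hk0 andbT ltn_ord.
Qed.

Definition degrees_at (X : seq (nat * nat)) a := [seq q.2 | q <- X & q.1 == a].
Definition degree_at X a := sumn (degrees_at X a).

Definition ffun_of_xroots X : {ffun 'I_r -> seq nat} :=
  [ffun i : 'I_r => sort leq (degrees_at X i.+1)].

Lemma isFr_ffun_of_xroots X : all (xroot_valid r) X -> isFr (ffun_of_xroots X).
Proof.
move=> /allP HX i; rewrite /isFplus ffunE sort_sorted /=; last exact: leq_total.
rewrite (perm_all _ (permEl (perm_sort leq _))) all_map; apply/allP => q.
by rewrite mem_filter => /andP [_ /HX /andP [_ Hq]].
Qed.

Lemma count_split_by_index X (a : pred (nat * nat)) : all (xroot_valid r) X ->
  \sum_(i <- enum 'I_r) count a [seq q <- X | q.1 == i.+1] = count a X.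
Proof.
elim: X => [|q X IH] /=; first by rewrite big1.
case/andP => /andP [/andP [q1_gt0 q1_le] _] /IH {}IH.
rewrite (eq_bigr (fun i : 'I_r => (a q && (q.1 == i.+1)) + count a [seq q' <- X | q'.1 == i.+1]))%N;
  last by move=> i _; case: eqP; rewrite /= ?andbT ?andbF.
rewrite big_split /= IH; congr addn; case: (a q) => /=; last by rewrite big1.
have q1_ord : (q.1 - 1 < r)%N by lia.
rewrite big_enum /= (bigD1 (Ordinal q1_ord)) //= big1 => [|i Hi].
  by have -> : q.1 == (q.1 - 1).+1 by apply/eqP; lia.
by case: eqP => // Hq; case/eqP: Hi; apply/val_inj => /=; lia.
Qed.

Lemma perm_xroots_ffun X : all (xroot_valid r) X -> perm_eq X (xroots (ffun_of_xroots X)).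
Proof.
move=> HX; apply/permP => a.
rewrite /xroots count_flatten -map_comp sumnE big_map -(count_split_by_index a HX).
apply: eq_bigr => i _ /=; rewrite ffunE.
rewrite (permP (perm_map _ (permEl (perm_sort leq _)))) -map_comp; congr count.
rewrite -[LHS]map_id; apply/eq_in_map => q; rewrite mem_filter => /andP [/eqP <- _].
by case: q.
Qed.

Lemma absF_ffun_of_xroots X i : absF (ffun_of_xroots X) i = degree_at X i.+1.
Proof. by rewrite /absF ffunE (perm_sumn (permEl (perm_sort leq _))). Qed.

Lemma absF_xroots p i : absF p i = degree_at (xroots p) i.+1.
Proof.
rewrite /absF /degree_at /degrees_at /xroots filter_flatten map_flatten sumn_flatten -!map_comp.
rewrite [RHS]sumnE big_map ?enumT enumI (bigD1 i) //= big1 => [|j Hj].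
  rewrite filter_map /= -map_comp /preim /=.
  rewrite (eq_filter (a2 := predT)); last by move=> k /=; rewrite eqxx.
  by rewrite filter_predT map_id addn0.
rewrite filter_map /preim /=.
rewrite (eq_filter (a2 := pred0)) ?filter_pred0 // => k /=.
by apply/eqP => /eqP; rewrite eqSS => /eqP H; move/eqP: Hj; apply; apply: val_inj.
Qed.

Lemma tail_degree_split t M : tail_degree t M = (degree_at M t + tail_degree t.+1 M)%N.
Proof.
elim: M => [|[p v] M IH] //.
have -> : degree_at ((p, v) :: M) t = ((if p == t then v else 0) + degree_at M t)%N.
  by rewrite /degree_at /degrees_at /=; case: eqP.
by rewrite !tail_degree_cons IH; case: eqP; case: (leqP t p); case: (leqP t.+1 p); lia.
Qed.

Lemma tail_degree_large t M : all (xroot_valid r) M -> (r < t)%N -> tail_degree t M = 0%N.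
Proof.
move=> HM Ht; rewrite /tail_degree (eq_in_filter (a2 := pred0)) ?filter_pred0 // => q /=.
move/allP: HM => /(_ q) H /H; rewrite /xroot_valid => /andP [/andP [_ H2] _].
apply/negbTE; lia.
Qed.

Lemma tail_degree0 M : all (xroot_valid r) M -> tail_degree 0 M = tail_degree 1 M.
Proof.
move=> HM; rewrite /tail_degree; congr sumn; congr map; apply: eq_in_filter => q /=.
move/allP: HM => /(_ q) H /H; rewrite /xroot_valid => /andP [/andP [H1 _] _].
by rewrite H1.
Qed.

Lemma sdominates_btri (d e : 'I_r -> nat) M M' : all (xroot_valid r) M -> all (xroot_valid r) M' ->
  (forall i, d i = degree_at M i.+1) -> (forall i, e i = degree_at M' i.+1) ->
  dominates M M' -> (exists t, (tail_degree t M' < tail_degree t M)%N) -> btri d e.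
Proof.
move=> HM HM' Hd He Hge [t Ht].
pose P := fun n => (0 < n)%N && (n <= r)%N && (tail_degree n M' < tail_degree n M)%N.
have HP : exists n, P n.
  case: (leqP t r) => Htr; last by rewrite !tail_degree_large // in Ht.
  case: t Ht Htr => [|t] Ht Htr.
    exists 1%N; rewrite /P /= -!tail_degree0 // Ht andbT.
    case: (posnP r) => [Hr0|//]; have Hr1 : (r < 1)%N by rewrite Hr0.
    by move: Ht; rewrite !tail_degree0 // !tail_degree_large.
  by exists t.+1; rewrite /P Ht Htr.
have Hub : forall n, P n -> (n <= r)%N by move=> n /andP [/andP [_ ->] _].
case: (ex_maxnP HP Hub) => m /andP [/andP [Hm0 Hmr] Hm] Hmax.
have Heq : forall n, (m < n)%N -> tail_degree n M = tail_degree n M'.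
  move=> n Hn; case: (leqP n r) => Hnr; last by rewrite !tail_degree_large.
  apply/eqP; rewrite eqn_leq Hge andbT leqNgt; apply/negP => Hlt.
  have := Hmax n; rewrite /P Hlt Hnr (ltn_trans Hm0 Hn) => /(_ isT); lia.
have Hm1 : (m - 1 < r)%N by lia.
exists (Ordinal Hm1); split.
  rewrite Hd He /=; have -> : (m - 1).+1 = m by lia.
  move: Hm; rewrite (tail_degree_split m M) (tail_degree_split m M') (Heq m.+1) //; lia.
move=> u /= Hu; rewrite Hd He.
have E1 := tail_degree_split u.+1 M; have E2 := tail_degree_split u.+1 M'.
rewrite (Heq u.+1) in E1; last lia.
rewrite (Heq u.+2) in E1; last lia.
lia.
Qed.

End Canonical.

Section Commutator.
Variables (r : nat) (s : {ffun 'I_r -> seq nat}).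
Hypothesis Fs : isFr s.

Definition nf_term (e : (C * word r) * {ffun 'I_r -> seq nat}) : C * word r :=
  (e.1.1, e.1.2 ++ xword e.2).

Definition nf_ok (e : (C * word r) * {ffun 'I_r -> seq nat}) :=
  [/\ nminus_word e.1.2, isFr e.2 & (e.1.2 = [::] -> btri (absF e.2) (absF s))].

Lemma expands_nf_term u (z : nterm) : u <> [::] ->
  improves_term r u (xroots s) z -> expands nf_term nf_ok [:: nterm_val r z].
Proof.
case: z => [[c u'] X'] u0 [/= Vu' VX' Hd Hs].
apply: (expands_eqU (h := [:: nf_term (c, xminus_seq r u', ffun_of_xroots r X')])).
  rewrite /nf_term /= xword_xplus_seq; apply: eqU_scale.
  by have := eqU_xplus_perm (xminus_seq r u') [::] VX' (perm_xroots_ffun VX'); rewrite !cats0.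
apply: expands_term; split=> /=; first exact: xminus_seq_nminus_word.
  exact: isFr_ffun_of_xroots.
move=> u'_nil; have u'0 : u' = [::] by case: (u') u'_nil.
have [Hd' [t Ht]] := Hs u'0 u0; rewrite u'0 in Hd' Ht.
apply: (sdominates_btri VX' (xroots_valid Fs)) => [i|i|t'|].
- exact: absF_ffun_of_xroots.
- exact: absF_xroots.
- by apply: leq_trans _ (Hd' t'); rewrite tail_potential leq_addl.
- by exists t; apply: leq_ltn_trans Ht; rewrite tail_potential leq_addl.
Qed.

Lemma expands_xword_xminus c u : all (fun y => nroot_valid r y.1) u -> u <> [::] ->
  expands nf_term nf_ok [:: (c, xword s ++ xminus_seq r u)].
Proof.
move=> Vu u0; apply: (expands_trans (G := nterm_val r)) (fun z => expands_nf_term u0).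
rewrite xword_xplus_seq -[_ ++ _]cats0 -[_ ++ _]cat0s.
apply: (expands_monomial (G' := nterm_val r) (phi := fun z : nterm => (c * z.1.1, z.1.2, z.2)))
  (normal_order (xroots_valid Fs) Vu) => // z.
by rewrite /nterm_val /= cats0.
Qed.

End Commutator.

Unset Implicit Arguments.

Theorem lemma4p9 (r : nat) (s : {ffun 'I_r -> seq nat}) (g : fsum r) (eta : 'I_r -> C) :
  isFr s ->
  (forall x, x \in g -> nminus_word x.2 /\ word_wt x.2 (fun i => - eta i)) ->
  (exists i, eta i != 0) ->
  exists L : seq ((C * word r) * {ffun 'I_r -> seq nat}),
    (forall e, e \in L ->
        [/\ nminus_word e.1.2, isFr e.2 & (e.1.2 = [::] -> btri (absF e.2) (absF s))]) /\
    eqU (fmul (fone (xword s)) g ++ fneg (fmul g (fone (xword s))))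
        [seq (e.1.1, e.1.2 ++ xword e.2) | e <- L].
Proof.
move=> Fs Hg [i0 eta_i0].
have g_nonconst x : x \in g -> x.2 <> [::].
  move=> /Hg [_ + x0]; rewrite x0 => /(_ i0) /eqP; rewrite oppr_eq0.
  by rewrite (negbTE eta_i0).
suff [L EL OKL] : expands (nf_term (r := r)) (nf_ok s)
    (fmul (fone (xword s)) g ++ fneg (fmul g (fone (xword s)))) by exists L.
apply: expands_cat.
  rewrite fmul1l; apply: expands_map => x Hx /=.
  have [u [Vu x2]] := nminus_word_xminus_seq (proj1 (Hg x Hx)).
  rewrite x2; apply: expands_xword_xminus => // u0.
  by apply: (g_nonconst x Hx); rewrite x2 u0.
rewrite /fneg /fone fmul_monomial -map_comp.
apply: (expands_map (F := fun x => nf_term ((- (x.1 * 1), x.2), s))) => x Hx.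
by apply: expands_term; split=> //; [exact: (proj1 (Hg x Hx)) | move/(g_nonconst x Hx)].
Qed.
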